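(* Let $\mathcal{T}$ be an $l$-eligible microdata table, and run Phase One of the algorithm described in the context, obtaining $\dot{Q}_1,\dots,\dot{Q}_s,\dot{R}$. If $\dot{R}$ is $l$-eligible, then $(\dot{Q}_1,\dots,\dot{Q}_s,\dot{R})$ is an optimal solution of the reformulated tuple minimization problem, i.e., $|\dot{R}| = OPT$.
   Context: A microdata table $\mathcal{T}$ is a multiset of $n$ tuples, each with values on $d$ quasi-identifier (QI) attributes and one sensitive attribute (SA). For a multiset $Q$ of tuples and SA value $v$, $h(Q,v)$ is the number of tuples of $Q$ with SA value $v$, $h(Q)=\max_v h(Q,v)$, and the pillars of $Q$ are the SA values $v$ with $h(Q,v)=h(Q)$. $Q$ is $l$-eligible if $|Q|\ge l\cdot h(Q)$. Partition $\mathcal{T}$ into $Q_1,\dots,Q_s$, the maximal classes of tuples having identical values on all QI attributes. Reformulated tuple minimization: choose sub-multisets $Q'_i\subseteq Q_i$ and let $R'=\mathcal{T}\setminus\bigcup_i Q'_i$, such that every $Q'_i$ and $R'$ are $l$-eligible, minimizing $|R'|$; $OPT$ denotes the minimum value. Phase One: start with $R=\emptyset$; for each $i$, while $Q_i$ is not $l$-eligible, move one tuple whose SA value is a pillar of $Q_i$ from $Q_i$ to $R$ (ties arbitrary). $\dot{Q}_1,\dots,\dot{Q}_s,\dot{R}$ denote the resulting multisets. *)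

From mathcomp Require Import all_boot.
Set Implicit Arguments. Unset Strict Implicit. Unset Printing Implicit Defensive.

Section Microdata.
Variables (QT ST : eqType).
(* a tuple: its QI values (all d attributes packed in QT) and its SA value *)
Definition tup := (QT * ST)%type.

Definition hv (Q : seq tup) (v : ST) : nat := count (fun t => t.2 == v) Q.
(* h(Q) = max_v h(Q,v)  (0 for empty Q) *)
Definition hmax (Q : seq tup) : nat := \max_(t <- Q) hv Q t.2.
Definition pillar (Q : seq tup) (v : ST) : bool := hv Q v == hmax Q.
Definition eligible (l : nat) (Q : seq tup) : bool := l * hmax Q <= size Q.

Definition submset (Q' Q : seq tup) : bool :=
  all (fun x => count_mem x Q' <= count_mem x Q) Q'.

Definition qis (T : seq tup) : seq QT := undup (map fst T).
Definition classes (T : seq tup) : seq (seq tup) :=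
  [seq [seq t <- T | t.1 == q] | q <- qis T].

Definition feasible (l : nat) (T : seq tup) (Q' : seq (seq tup)) (R' : seq tup) : Prop :=
  [/\ size Q' = size (classes T),
      forall i, i < size Q' -> submset (nth [::] Q' i) (nth [::] (classes T) i),
      forall i, i < size Q' -> eligible l (nth [::] Q' i),
      perm_eq T (flatten Q' ++ R')
    & eligible l R'].

(* Phase One on one class: PhaseOneClass l Q Qdot Rpart means that repeatedly
   moving a tuple with pillar SA value out of Q while Q is not l-eligible can
   end with Qdot, the moved tuples being Rpart (any tie-breaking). *)
Inductive PhaseOneClass (l : nat) : seq tup -> seq tup -> seq tup -> Prop :=
| P1_done Q : eligible l Q -> PhaseOneClass l Q Q [::]
| P1_step Q x Qd Rp : ~~ eligible l Q -> x \in Q -> pillar Q x.2 ->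
    PhaseOneClass l (rem x Q) Qd Rp -> PhaseOneClass l Q Qd (x :: Rp).

Definition PhaseOne (l : nat) (T : seq tup) (Qd : seq (seq tup)) (Rd : seq tup) : Prop :=
  exists Rps : seq (seq tup),
    [/\ size Qd = size (classes T), size Rps = size (classes T),
        forall i, i < size (classes T) ->
          PhaseOneClass l (nth [::] (classes T) i) (nth [::] Qd i) (nth [::] Rps i)
      & Rd = flatten Rps].
End Microdata.

From mathcomp Require Import all_boot.
From mathcomp Require Import zify.
Set Implicit Arguments. Unset Strict Implicit. Unset Printing Implicit Defensive.

(* Phase One is optimal class by class. If Q is not l-eligible and v is a
   pillar of Q, then every l-eligible sub-multiset P of Q has h(P,v) < h(Q,v),
   because l h(P,v) <= l h(P) <= |P| <= |Q| < l h(Q) = l h(Q,v). So P stays a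
   sub-multiset of Q after one tuple with SA value v is removed, and by
   induction |P| <= |Q_dot|: Phase One keeps a largest l-eligible sub-multiset
   of each class. Summing over the classes, every feasible (Q', R') keeps at
   most sum |Q_dot_i| tuples out of R', so |R'| >= |R_dot|; when R_dot is
   l-eligible the output of Phase One is itself feasible. *)

Lemma count_le_count_mem (T : eqType) (s1 s2 : seq T) :
  (forall x, count_mem x s1 <= count_mem x s2) ->
  forall a : pred T, count a s1 <= count a s2.
Proof.
elim: s1 s2 => [|x s1 IH] s2 le_s12 a //=.
have x_s2 : x \in s2.
  by rewrite -has_pred1 has_count (leq_trans _ (le_s12 x)) //= eqxx.
have /permP s2_rem := perm_to_rem x_s2.
suff: count a s1 <= count a (rem x s2) by rewrite s2_rem /=; lia.
by apply: IH => y; have := le_s12 y; rewrite s2_rem /=; lia.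
Qed.

Lemma perm_flatten_cat (T : eqType) (ss ss1 ss2 : seq (seq T)) :
  size ss1 = size ss -> size ss2 = size ss ->
  (forall i, i < size ss -> perm_eq (nth [::] ss i) (nth [::] ss1 i ++ nth [::] ss2 i)) ->
  perm_eq (flatten ss) (flatten ss1 ++ flatten ss2).
Proof.
elim: ss ss1 ss2 => [|s ss IH] [|s1 ss1] [|s2 ss2] //= [size1] [size2] perm_i.
apply/permP => a; have /permP/(_ a) := perm_i 0 isT.
have /permP/(_ a) := IH _ _ size1 size2 (fun i => perm_i i.+1).
by rewrite /= !count_cat; lia.
Qed.

Lemma size_flatten_le (T : Type) (ss1 ss2 : seq (seq T)) :
  size ss1 = size ss2 ->
  (forall i, i < size ss1 -> size (nth [::] ss1 i) <= size (nth [::] ss2 i)) ->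
  size (flatten ss1) <= size (flatten ss2).
Proof.
elim: ss1 ss2 => [|s1 ss1 IH] [|s2 ss2] //= [size12] le_i.
by rewrite !size_cat leq_add ?(le_i 0) // (IH _ size12 (fun i => le_i i.+1)).
Qed.

Lemma perm_flatten_filter_key (A B : eqType) (f : A -> B) (ks : seq B) (s : seq A) :
  uniq ks -> all (fun x => f x \in ks) s ->
  perm_eq s (flatten [seq [seq x <- s | f x == k] | k <- ks]).
Proof.
elim: ks s => [|k ks IH] s /=; first by case: s.
case/andP => k_ks uniq_ks all_s.
rewrite -(perm_filterC (fun x => f x == k)) perm_cat2l.
have -> : [seq [seq x <- s | f x == k'] | k' <- ks] =
          [seq [seq x <- [seq x <- s | f x != k] | f x == k'] | k' <- ks].
  apply/eq_in_map => k' k'_ks; rewrite -filter_predI; apply: eq_filter => x /=.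
  by case: eqP => // ->; case: eqP => // eq_k; rewrite -eq_k k'_ks in k_ks.
apply: IH => //; apply/allP => x; rewrite mem_filter => /andP[/= x_k x_s].
by move/allP/(_ x x_s): all_s; rewrite in_cons (negbTE x_k).
Qed.

Section Microdata.
Variables (QT ST : eqType).
Implicit Types (P Q Qd Rp T : seq (QT * ST)) (v : ST).

Lemma hv_le_hmax Q v : hv Q v <= hmax Q.
Proof.
have [/hasP[t tQ /eqP <-]|] := boolP (has (fun t : QT * ST => t.2 == v) Q).
  exact: (@leq_bigmax_seq _ _ xpredT (fun t => hv Q t.2)).
by rewrite has_count -leqNgt leqn0 /hv => /eqP ->.
Qed.

Lemma size_le_hv P Q : (forall v, hv P v <= hv Q v) -> size P <= size Q.
Proof.
move=> le_PQ; rewrite -(size_map snd P) -(size_map snd Q) -!count_predT.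
by apply: count_le_count_mem => v; rewrite !count_map; apply: le_PQ.
Qed.

Lemma submset_hv P Q : submset P Q -> forall v, hv P v <= hv Q v.
Proof.
move=> /allP subPQ v; apply: count_le_count_mem => x.
have [/subPQ //|] := boolP (x \in P).
by rewrite -has_pred1 has_count -leqNgt leqn0 => /eqP ->.
Qed.

Lemma eligible_hv_pillar_lt l P Q v :
  ~~ eligible l Q -> pillar Q v ->
  (forall w, hv P w <= hv Q w) -> eligible l P -> hv P v < hv Q v.
Proof.
rewrite /eligible /pillar ltnNge => Q_inelig /eqP-> le_PQ P_elig.
apply: contra Q_inelig => le_hmax.
apply: leq_trans (leq_trans P_elig (size_le_hv le_PQ)).
by rewrite leq_mul2l (leq_trans le_hmax (hv_le_hmax P v)) orbT.
Qed.

Section PhaseOneClass.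
Variable l : nat.

Lemma PhaseOneClass_perm Q Qd Rp : PhaseOneClass l Q Qd Rp -> perm_eq Q (Qd ++ Rp).
Proof.
elim=> [Q0 _|Q0 x Qd0 Rp0 _ xQ _ _ IH]; first by rewrite cats0.
apply: perm_trans (perm_to_rem xQ) _.
by rewrite perm_sym -cat1s perm_catCA /= perm_cons perm_sym.
Qed.

Lemma PhaseOneClass_eligible Q Qd Rp : PhaseOneClass l Q Qd Rp -> eligible l Qd.
Proof. by elim. Qed.

Lemma PhaseOneClass_max Q Qd Rp P : PhaseOneClass l Q Qd Rp ->
  (forall v, hv P v <= hv Q v) -> eligible l P -> size P <= size Qd.
Proof.
move=> p1; elim: p1 P => [Q0 _|Q0 x Qd0 Rp0 Q0_inelig xQ0 x_pillar _ IH] P le_PQ P_elig.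
  exact: size_le_hv.
have hv_rem w : hv Q0 w = (x.2 == w) + hv (rem x Q0) w.
  by rewrite /hv (permP (perm_to_rem xQ0)).
have lt_x := eligible_hv_pillar_lt Q0_inelig x_pillar le_PQ P_elig.
apply: IH P_elig => w; have := le_PQ w; rewrite hv_rem.
case: eqP => [<-|_] //=; move: lt_x; rewrite hv_rem eqxx; lia.
Qed.

End PhaseOneClass.

Lemma perm_flatten_classes T : perm_eq T (flatten (classes T)).
Proof.
apply: perm_flatten_filter_key; first exact: undup_uniq.
by apply/allP => t tT; rewrite mem_undup map_f.
Qed.

End Microdata.

Theorem corollary1 (QT ST : eqType) (l : nat) (T : seq (QT * ST))
    (Qd : seq (seq (QT * ST))) (Rd : seq (QT * ST)) :
  eligible l T ->
  PhaseOne l T Qd Rd ->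
  eligible l Rd ->
  feasible l T Qd Rd /\
  (forall (Q' : seq (seq (QT * ST))) (R' : seq (QT * ST)),
      feasible l T Q' R' -> size Rd <= size R').
Proof.
move=> _ [Rps [size_Qd size_Rps p1 ->]] Rd_elig.
have T_perm : perm_eq T (flatten Qd ++ flatten Rps).
  apply: perm_trans (perm_flatten_classes T) _.
  by apply: perm_flatten_cat => // i /p1/PhaseOneClass_perm.
split.
  split=> // i; rewrite size_Qd => /p1 p1_i; last exact: PhaseOneClass_eligible p1_i.
  apply/allP => x _; rewrite (permP (PhaseOneClass_perm p1_i)) count_cat.
  exact: leq_addr.
move=> Q' R' [size_Q' sub_Q' elig_Q' T_perm' _].
have le_kept : size (flatten Q') <= size (flatten Qd).
  apply: size_flatten_le => [|i i_lt]; first by rewrite size_Q' size_Qd.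
  apply: PhaseOneClass_max (p1 i _) (submset_hv (sub_Q' i i_lt)) (elig_Q' i i_lt).
  by rewrite -size_Q'.
move: (perm_size T_perm) (perm_size T_perm'); rewrite !size_cat => size_T size_T'.
by rewrite -(leq_add2l (size (flatten Qd))) -size_T size_T' leq_add2r.
Qed.
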